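(* For every agent $k$ and every $n\ge0$, $\|e_{k,n}\|\le B_e$ and $\|\widehat e_{k,n}\|\le B_e$, where $B_e:=\frac{1}{1-\lambda\gamma}\Big(\lambda+\frac{1-\lambda}{1-\gamma/b_\epsilon}\Big)$.
   Context: Constants $\lambda,\gamma\in(0,1)$ and $b_\epsilon>0$ with $\gamma<b_\epsilon$. For each agent $k$, importance ratios $\rho_{k,n},\widehat\rho_{k,n}>0$ satisfy $\rho_{k,n},\widehat\rho_{k,n}\le1/b_\epsilon$. Belief vectors $\mu_{k,n},\widehat\mu_{k,n}$ are probability vectors over a finite state set (so Euclidean norms are at most 1). Define $F_{k,0}=0$, $F_{k,n}=1+\gamma\rho_{k,n-1}F_{k,n-1}$, $M_{k,n}=\lambda+(1-\lambda)F_{k,n}$, $e_{k,-1}=0$, $e_{k,n}=\gamma\lambda e_{k,n-1}+M_{k,n}\mu_{k,n}$; the hatted quantities $\widehat F,\widehat M,\widehat e$ are defined identically with $\widehat\rho,\widehat\mu$ in place of $\rho,\mu$. $\|\cdot\|$ is the Euclidean norm. *)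

From HB Require Import structures.
From mathcomp Require Import all_boot all_order all_algebra.
Set Implicit Arguments. Unset Strict Implicit. Unset Printing Implicit Defensive.
Import Order.TTheory GRing.Theory Num.Theory.
Local Open Scope ring_scope.

Definition enorm (R : rcfType) (m : nat) (v : 'rV[R]_m) : R :=
  Num.sqrt (\sum_(i < m) (v 0 i) ^+ 2).

Definition prob_vec (R : rcfType) (m : nat) (v : 'rV[R]_m) : Prop :=
  (forall i, 0 <= v 0 i) /\ \sum_(i < m) v 0 i = 1.

Fixpoint Fseq (R : rcfType) (gamma : R) (rho : nat -> R) (n : nat) : R :=
  match n with
  | 0%N => 0
  | n'.+1 => 1 + gamma * rho n' * Fseq gamma rho n'
  end.

Definition Mseq (R : rcfType) (lambda gamma : R) (rho : nat -> R) (n : nat) : R :=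
  lambda + (1 - lambda) * Fseq gamma rho n.

(* eaux n = e_{n-1}; eaux 0 = e_{-1} = 0,
   e_n = gamma lambda e_{n-1} + M_n mu_n *)
Fixpoint eaux (R : rcfType) (m : nat) (lambda gamma : R) (rho : nat -> R)
    (mu : nat -> 'rV[R]_m) (n : nat) : 'rV[R]_m :=
  match n with
  | 0%N => 0
  | n'.+1 => (gamma * lambda) *: eaux lambda gamma rho mu n'
             + Mseq lambda gamma rho n' *: mu n'
  end.

Definition eseq (R : rcfType) (m : nat) (lambda gamma : R) (rho : nat -> R)
    (mu : nat -> 'rV[R]_m) (n : nat) : 'rV[R]_m :=
  eaux lambda gamma rho mu n.+1.

Definition Be (R : rcfType) (lambda gamma beps : R) : R :=
  (1 - lambda * gamma)^-1 * (lambda + (1 - lambda) / (1 - gamma / beps)).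

(* The scalar recursion F_{n+1} = 1 + gamma rho_n F_n has contraction factor
   gamma rho_n <= gamma / beps < 1, so F_n, and hence the convex combination M_n,
   stays below its fixed point.  The entries of e_n are nonnegative and their sum
   obeys s_n = gamma lambda s_{n-1} + M_n, so it stays below the fixed point
   B_e = sup M / (1 - gamma lambda); finally the Euclidean norm of a nonnegative
   vector is at most the sum of its entries. *)
From HB Require Import structures.
From mathcomp Require Import all_boot all_order all_algebra.
From mathcomp Require Import lra.
Import Order.TTheory GRing.Theory Num.Theory.
Local Open Scope ring_scope.

Lemma enorm_le_sum (R : rcfType) (m : nat) (v : 'rV[R]_m) :
  (forall i, 0 <= v 0 i) -> enorm v <= \sum_(i < m) v 0 i.
Proof.
move=> v_ge0; rewrite /enorm.
have sum_ge0 : 0 <= \sum_(i < m) v 0 i by apply: sumr_ge0.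
rewrite -[X in _ <= X](ger0_norm sum_ge0) -sqrtr_sqr; apply: ler_wsqrtr.
rewrite expr2 mulr_suml; apply: ler_sum => i _; rewrite expr2.
apply: ler_wpM2l => //; rewrite (bigD1 i) //= lerDl.
by apply: sumr_ge0.
Qed.

Section Traces.

Variables (R : rcfType) (m : nat) (lambda gamma : R).
Variables (rho : nat -> R) (mu : nat -> 'rV[R]_m).

Lemma Fseq_bounds {c : R} : c < 1 -> (forall n, 0 <= gamma * rho n <= c) ->
  forall n, 0 <= Fseq gamma rho n <= (1 - c)^-1.
Proof.
move=> c_lt1 contraction; have c_ge0 : 0 <= c by have := contraction 0%N; lra.
set C := (1 - c)^-1.
have fixpoint : (1 - c) * C = 1 by rewrite mulfV //; lra.
elim=> [|n /andP[F_ge0 F_le]] /=; first by rewrite lexx invr_ge0; lra.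
have /andP[a_ge0 a_le] := contraction n.
have aF_le : gamma * rho n * Fseq gamma rho n <= c * C.
  apply: le_trans (ler_wpM2r F_ge0 a_le) _; exact: ler_wpM2l.
have aF_ge0 : 0 <= gamma * rho n * Fseq gamma rho n by exact: mulr_ge0.
apply/andP; split; lra.
Qed.

Lemma Mseq_bounds {C : R} : 0 <= lambda <= 1 ->
  (forall n, 0 <= Fseq gamma rho n <= C) ->
  forall n, 0 <= Mseq lambda gamma rho n <= lambda + (1 - lambda) * C.
Proof.
move=> /andP[l_ge0 l_le1] F_bd n; have /andP[F_ge0 F_le] := F_bd n.
rewrite /Mseq lerD2l ler_wpM2l ?subr_ge0 // andbT.
by rewrite addr_ge0 // mulr_ge0 // subr_ge0.
Qed.

Hypothesis mu_prob : forall n, prob_vec (mu n).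

Lemma eaux_ge0 : 0 <= gamma * lambda ->
  (forall n, 0 <= Mseq lambda gamma rho n) ->
  forall n i, 0 <= eaux lambda gamma rho mu n 0 i.
Proof.
move=> gl_ge0 M_ge0; elim=> [|n IHn] i /=; rewrite !mxE //.
by rewrite addr_ge0 // mulr_ge0 //; case: (mu_prob n).
Qed.

Lemma sum_eauxS n :
  \sum_(i < m) eaux lambda gamma rho mu n.+1 0 i
  = gamma * lambda * \sum_(i < m) eaux lambda gamma rho mu n 0 i
    + Mseq lambda gamma rho n.
Proof.
under eq_bigr => i _ do rewrite !mxE.
by rewrite big_split /= -!mulr_sumr; case: (mu_prob n) => _ ->; rewrite mulr1.
Qed.

Lemma sum_eaux_le {K : R} : 0 <= gamma * lambda < 1 ->
  (forall n, 0 <= Mseq lambda gamma rho n <= K) ->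
  forall n, \sum_(i < m) eaux lambda gamma rho mu n 0 i
            <= (1 - gamma * lambda)^-1 * K.
Proof.
move=> /andP[gl_ge0 gl_lt1] M_bd; set B := (1 - gamma * lambda)^-1 * K.
have fixpoint : (1 - gamma * lambda) * B = K by rewrite mulrA mulfV ?mul1r //; lra.
have K_ge0 : 0 <= K by have /andP[M_ge0 M_le] := M_bd 0%N; exact: le_trans M_le.
have B_ge0 : 0 <= B by rewrite mulr_ge0 // invr_ge0; lra.
elim=> [|n IHn]; first by rewrite big1 // => i _; rewrite mxE.
rewrite sum_eauxS; have /andP[_ M_le] := M_bd n.
have := ler_wpM2l gl_ge0 IHn; lra.
Qed.

Lemma enorm_eseq_le_Be (beps : R) :
  0 < lambda < 1 -> 0 < gamma < 1 -> 0 < beps -> gamma < beps ->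
  (forall n, 0 < rho n <= 1 / beps) ->
  forall n, enorm (eseq lambda gamma rho mu n) <= Be lambda gamma beps.
Proof.
move=> /andP[l_gt0 l_lt1] /andP[g_gt0 g_lt1] b_gt0 g_lt_b rho_bd n.
have c_lt1 : gamma / beps < 1 by rewrite ltr_pdivrMr // mul1r.
have contraction k : 0 <= gamma * rho k <= gamma / beps.
  have /andP[r_gt0 r_le] := rho_bd k.
  rewrite ler_pM2l // -div1r r_le andbT; exact: mulr_ge0 (ltW g_gt0) (ltW r_gt0).
have l_bd : 0 <= lambda <= 1 by rewrite !ltW.
have M_bd := Mseq_bounds l_bd (Fseq_bounds c_lt1 contraction).
have BeE : Be lambda gamma beps
    = (1 - gamma * lambda)^-1 * (lambda + (1 - lambda) * (1 - gamma / beps)^-1).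
  by rewrite /Be [lambda * gamma]mulrC.
have gl_bd : 0 <= gamma * lambda < 1 by apply/andP; split; nra.
rewrite BeE /eseq; apply: le_trans (sum_eaux_le gl_bd M_bd n.+1).
apply: enorm_le_sum; apply: eaux_ge0 => [|k]; first by case/andP: gl_bd.
by case/andP: (M_bd k).
Qed.

End Traces.

Theorem lemma2 (R : rcfType) (Agent : Type) (m : nat)
  (lambda gamma beps : R)
  (rho rhohat : Agent -> nat -> R) (mu muhat : Agent -> nat -> 'rV[R]_m) :
  0 < lambda < 1 -> 0 < gamma < 1 -> 0 < beps -> gamma < beps ->
  (forall k n, 0 < rho k n /\ rho k n <= 1 / beps) ->
  (forall k n, 0 < rhohat k n /\ rhohat k n <= 1 / beps) ->
  (forall k n, prob_vec (mu k n)) ->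
  (forall k n, prob_vec (muhat k n)) ->
  forall k n,
    enorm (eseq lambda gamma (rho k) (mu k) n) <= Be lambda gamma beps /\
    enorm (eseq lambda gamma (rhohat k) (muhat k) n) <= Be lambda gamma beps.
Proof.
move=> l_bd g_bd b_gt0 g_lt_b rho_bd rhohat_bd mu_prob muhat_prob k n.
split; apply: enorm_eseq_le_Be => // j.
- by have [r_gt0 r_le] := rho_bd k j; apply/andP.
- by have [r_gt0 r_le] := rhohat_bd k j; apply/andP.
Qed.
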